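(* For every tWF net $N$: $N$ is $*$-sound if and only if $N$ is sub-sound.
   Context: Petri nets and markings. A Petri net is a triple $(P,T,F)$ with $P$ a finite set of places, $T$ a finite set of transitions, $P\cap T=\emptyset$, and $F\subseteq (P\times T)\cup(T\times P)$. For a node $x$, $\bullet x=\{y\mid (y,x)\in F\}$, $x\bullet=\{y\mid (x,y)\in F\}$. A marking is a multiset over $P$ (a function $P\to\mathbb N$); sets of places are identified with bags of multiplicity one, $+,-,\le$ are pointwise, and $k.m$ is the sum of $k$ copies of $m$. Transition $t$ is enabled at $m$ iff $\bullet t\le m$, firing gives $m-\bullet t+t\bullet$, and $m\xrightarrow{*}m'$ denotes reachability by a finite (possibly empty) firing sequence. Workflow nets. A pWF net is $(P,T,F,I,O)$ with $(P,T,F)$ a Petri net, $I,O\subseteq P$ non-empty, every node reachable by a directed path from some node of $I$, and some node of $O$ reachable from every node. A tWF net is the same with $I,O$ non-empty subsets of $T$. Input nodes may have incoming edges and output nodes outgoing edges. The place-completion $\mathrm{pc}(N)$ of a tWF net $N=(P,T,F,I,O)$ is obtained by adding two fresh places $p_i,p_o$ with edges $(p_i,t)$ for all $t\in I$ and $(t,p_o)$ for all $t\in O$, and taking input set $\{p_i\}$ and output set $\{p_o\}$. Soundness. A pWF net is $k$-sound if for every marking $m$ with $k.I\xrightarrow{*}m$ we have $m\xrightarrow{*}k.O$; $*$-sound if $k$-sound for all $k\ge1$; sub-sound if for all integers $k\ge k'\ge 0$ and every marking $m'$: $k.I\xrightarrow{*}m'+k'.O$ implies $m'\xrightarrow{*}(k-k').O$.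 A tWF net is $*$-sound (resp. sub-sound) iff its place-completion is. *)

From Stdlib Require Import Relations.
From mathcomp Require Import all_boot.
Set Implicit Arguments. Unset Strict Implicit. Unset Printing Implicit Defensive.

(* A Petri net (P,T,F) with finite place set P and transition set T (disjoint
   since nodes are P + T).  The flow relation F is given by
   pre p t  <=> (p,t) \in F     and    post t p <=> (t,p) \in F. *)
Record petri_net (P T : finType) := PetriNet {
  pre  : P -> T -> bool;
  post : T -> P -> bool }.

Section Nets.
Variables (P T : finType) (N : petri_net P T).

Definition marking := {ffun P -> nat}.

Definition mk_add (m1 m2 : marking) : marking := [ffun p => m1 p + m2 p].
Definition mk_scale (k : nat) (m : marking) : marking := [ffun p => k * m p].
Definition mk_of_set (A : {set P}) : marking := [ffun p => nat_of_bool (p \in A)].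

Definition enabled (m : marking) (t : T) : Prop :=
  forall p, nat_of_bool (pre N p t) <= m p.

Definition fire (m : marking) (t : T) : marking :=
  [ffun p => m p - nat_of_bool (pre N p t) + nat_of_bool (post N t p)].

Inductive step (m m' : marking) : Prop :=
  | Step t : enabled m t -> m' = fire m t -> step m m'.

Definition reach : marking -> marking -> Prop := clos_refl_trans marking step.

Definition flow (x y : P + T) : bool :=
  match x, y with
  | inl p, inr t => pre N p t
  | inr t, inl p => post N t p
  | _, _ => false
  end.

Definition is_pWF (I O : {set P}) : Prop :=
  I != set0 /\ O != set0 /\
  (forall x : P + T, exists2 i, i \in I & connect flow (inl i) x) /\
  (forall x : P + T, exists2 o, o \in O & connect flow x (inl o)).

Definition is_tWF (I O : {set T}) : Prop :=
  I != set0 /\ O != set0 /\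
  (forall x : P + T, exists2 i, i \in I & connect flow (inr i) x) /\
  (forall x : P + T, exists2 o, o \in O & connect flow x (inr o)).

Definition k_sound (I O : {set P}) (k : nat) : Prop :=
  forall m, reach (mk_scale k (mk_of_set I)) m -> reach m (mk_scale k (mk_of_set O)).

Definition star_sound (I O : {set P}) : Prop :=
  forall k, 1 <= k -> k_sound I O k.

Definition sub_sound (I O : {set P}) : Prop :=
  forall (k k' : nat) (m' : marking), k' <= k ->
    reach (mk_scale k (mk_of_set I)) (mk_add m' (mk_scale k' (mk_of_set O))) ->
    reach m' (mk_scale (k - k') (mk_of_set O)).

End Nets.

(* Place completion of a tWF net: places P + bool, where inr false = p_i and
   inr true = p_o are the two fresh places. *)
Definition pc_net (P T : finType) (N : petri_net P T) (I O : {set T})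
  : petri_net (P + bool)%type T :=
  PetriNet
    (fun (q : P + bool) (t : T) => match q with
              | inl p => pre N p t
              | inr false => t \in I
              | inr true => false end)
    (fun (t : T) (q : P + bool) => match q with
              | inl p => post N t p
              | inr false => false
              | inr true => t \in O end).

Definition pc_in (P : finType) : {set P + bool} := [set inr false].
Definition pc_out (P : finType) : {set P + bool} := [set inr true].

Definition star_sound_t (P T : finType) (N : petri_net P T) (I O : {set T}) :=
  star_sound (pc_net N I O) (pc_in P) (pc_out P).

Definition sub_sound_t (P T : finType) (N : petri_net P T) (I O : {set T}) :=
  sub_sound (pc_net N I O) (pc_in P) (pc_out P).

From Stdlib Require Import Relations.
From mathcomp Require Import all_boot.

Set Implicit Arguments. Unset Strict Implicit.

(* Sub-soundness with k' = 0 is exactly k-soundness (also for k = 0), so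
   sub-soundness implies *-soundness.  For the converse two facts about the
   place completion pc(N) suffice, and we prove the equivalence for any pWF-like
   net enjoying them:
   - the output places are sinks (no transition consumes from them), so tokens
     lying there are frozen: a run from  m' + k'.O  is a run from  m'  with
     k'.O carried along unchanged;
   - every transition has an input place, so the empty marking is dead.
   Given k.I -*-> m' + k'.O with k >= 1, k-soundness yields m' + k'.O -*-> k.O,
   and stripping the frozen k'.O gives m' -*-> (k - k').O.  For k = 0 the empty
   marking reaches only itself, hence m' is empty.  Finally pc(N) has both
   properties: p_o has no outgoing arcs, and every transition of a tWF net is
   reached from an input transition, so it has a pre-place in N or p_i. *)

Section MarkingAlgebra.
Variable P : finType.

Definition mk_zero : marking P := [ffun=> 0].

Lemma mk_scale0 (m : marking P) : mk_scale 0 m = mk_zero.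
Proof. by apply/ffunP => p; rewrite !ffunE. Qed.

Lemma mk_addm0 (m : marking P) : mk_add m mk_zero = m.
Proof. by apply/ffunP => p; rewrite !ffunE addn0. Qed.

Lemma mk_addIm (a b c : marking P) : mk_add a c = mk_add b c -> a = b.
Proof.
by move=> Eabc; apply/ffunP => p; have /ffunP/(_ p) := Eabc; rewrite !ffunE => /addIn.
Qed.

Lemma mk_scale_subnK (k k' : nat) (m : marking P) :
  k' <= k -> mk_scale k m = mk_add (mk_scale (k - k') m) (mk_scale k' m).
Proof. by move=> lek; apply/ffunP => p; rewrite !ffunE -mulnDl subnK. Qed.

End MarkingAlgebra.

Section FrozenTokens.
Variables (P T : finType) (N : petri_net P T).

Definition sink_marking (c : marking P) : Prop :=
  forall p t, pre N p t -> c p = 0.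

Lemma scale_set_sink (O : {set P}) (d : nat) :
  (forall p t, p \in O -> ~~ pre N p t) -> sink_marking (mk_scale d (mk_of_set O)).
Proof.
move=> O_sink p t Hpre.
by rewrite !ffunE (negbTE (contraL (O_sink p t) Hpre)) muln0.
Qed.

Variable c : marking P.
Hypothesis c_sink : sink_marking c.

Lemma enabled_strip_sink (a : marking P) (t : T) :
  enabled N (mk_add a c) t -> enabled N a t.
Proof.
move=> en p; have := en p; rewrite ffunE.
by case Hpre: (pre N p t) => //=; rewrite (c_sink Hpre) addn0.
Qed.

Lemma fire_add_sink (a : marking P) (t : T) :
  fire N (mk_add a c) t = mk_add (fire N a t) c.
Proof.
apply/ffunP => p; rewrite !ffunE.
case Hpre: (pre N p t) => /=; last by rewrite !subn0 addnAC.
by rewrite (c_sink Hpre) !addn0.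
Qed.

Lemma reach_strip_sink (a y : marking P) :
  reach N (mk_add a c) y -> exists2 b, y = mk_add b c & reach N a b.
Proof.
move=> /clos_rt_rt1n_iff R; move Ex: (mk_add a c) R => x R.
elim: R a Ex => [x0|x0 z y0 [t en ->] _ IH] a Ex; subst.
  by exists a => //; apply: rt_refl.
have [b -> Rb] := IH (fire N a t) (esym (fire_add_sink a t)).
exists b => //; apply: rt_trans (rt_step _ _ _ _ _) Rb.
exact: Step (enabled_strip_sink en) (erefl _).
Qed.

End FrozenTokens.

Section DeadMarkings.
Variables (P T : finType) (N : petri_net P T).

Definition dead (m : marking P) : Prop := forall t, ~ enabled N m t.

Lemma reach_dead (m m' : marking P) : dead m -> reach N m m' -> m' = m.
Proof.
move=> dm /clos_rt_rt1n_iff R; case: R => // y z [t en _] _.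
by case: (dm t en).
Qed.

Lemma dead_zero : (forall t, exists p, pre N p t) -> dead (mk_zero P).
Proof. by move=> has_pre t en; have [p Hp] := has_pre t; have := en p; rewrite ffunE Hp. Qed.

End DeadMarkings.

Theorem star_sound_iff_sub_sound (P T : finType) (N : petri_net P T) (I O : {set P}) :
  (forall p t, p \in O -> ~~ pre N p t) ->
  (forall t, exists p, pre N p t) ->
  (star_sound N I O <-> sub_sound N I O).
Proof.
move=> O_sink has_pre; split=> [sound k k' m' lek R | sub k _ m R]; last first.
  by rewrite -(subn0 k); apply: sub (leq0n k) _; rewrite mk_scale0 mk_addm0.
case: k lek R => [|k] lek R.
  move: lek; rewrite leqn0 => /eqP k'0; subst k'.
  rewrite subnn !mk_scale0 mk_addm0 in R *.
  by rewrite (reach_dead (dead_zero has_pre) R); apply: rt_refl.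
have [b Eb Rb] := reach_strip_sink (scale_set_sink k' O_sink) (sound k.+1 erefl _ R).
rewrite (mk_scale_subnK _ lek) in Eb.
by rewrite (mk_addIm Eb).
Qed.

Section PlaceCompletion.
Variables (P T : finType) (N : petri_net P T) (I O : {set T}).

Lemma pc_out_sink (q : P + bool) (t : T) :
  q \in pc_out P -> ~~ pre (pc_net N I O) q t.
Proof. by rewrite in_set1 => /eqP ->. Qed.

(* In a tWF net every transition is reached from an input transition, so in
   pc(N) it consumes either from a place of N or from p_i. *)
Lemma pc_has_pre :
  (forall x : P + T, exists2 i, i \in I & connect (flow N) (inr i) x) ->
  forall t, exists q, pre (pc_net N I O) q t.
Proof.
move=> from_I t; have [i iI /connectP [s Hs Et]] := from_I (inr t).
case/lastP: s Hs Et => [|s z] Hs Et.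
  by case: Et => ->; exists (inr false).
rewrite rcons_path last_rcons in Hs Et; subst z.
case/andP: Hs => _; case: (last (inr i) s) => [p|u] //= Hpre.
by exists (inl p).
Qed.

End PlaceCompletion.

Theorem mainTheorem7 (P T : finType) (N : petri_net P T) (I O : {set T}) :
  is_tWF N I O -> (star_sound_t N I O <-> sub_sound_t N I O).
Proof.
move=> [_ [_ [from_I _]]].
apply: star_sound_iff_sub_sound; first exact: pc_out_sink.
exact: pc_has_pre.
Qed.
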